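(* Let $s,r,t,\ell,m$ be integers with $1 \le s \le r \le \ell \le m$ and $1 \le t < \ell$. Then $$\hat{w}_r(t;\ell,m)-\hat{w}_s(t;\ell,m)=q^t\bigl(\hat{\mathfrak w}_{r-1}(t;\ell-1,m-1)-\hat{\mathfrak w}_{s-1}(t;\ell-1,m-1)\bigr).$$ In particular $\hat{w}_r(t;\ell,m)-\hat{w}_1(t;\ell,m)=q^t\,\hat{\mathfrak w}_{r-1}(t;\ell-1,m-1)$.
   Context: $q$ is a prime power. For an $a\times b$ matrix $M=(m_{ij})$ and $0\le r\le a$, $\tau_r(M)=m_{11}+\cdots+m_{rr}$ ($\tau_0=0$). $\mathfrak w_r(t;a,b)$ is the number of $a\times b$ matrices over $\mathbb{F}_q$ of rank exactly $t$ with $\tau_r(M)\ne0$, and $\hat{\mathfrak w}_r(t;a,b)=\mathfrak w_r(t;a,b)/(q-1)$. Also $\hat{w}_r(t;\ell,m)=\sum_{s=1}^t\hat{\mathfrak w}_r(s;\ell,m)$, i.e. $\frac{1}{q-1}$ times the number of $\ell\times m$ matrices $M$ over $\mathbb{F}_q$ with $1\le\mathrm{rk}(M)\le t$ and $\tau_r(M)\ne 0$. *)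

From HB Require Import structures.
From mathcomp Require Import all_boot all_order all_algebra all_field.
Set Implicit Arguments. Unset Strict Implicit. Unset Printing Implicit Defensive.
Import GRing.Theory Num.Theory.
Local Open Scope ring_scope.

Definition tau (F : fieldType) (a b r : nat) (M : 'M[F]_(a, b)) : F :=
  \sum_(i < a | (i < r)%N) \sum_(j < b | (j : nat) == (i : nat)) M i j.

Definition frakw (F : finFieldType) (r t a b : nat) : nat :=
  #|[set M : 'M[F]_(a, b) | (\rank M == t) && (tau r M != 0)]|.

Definition hfrakw (F : finFieldType) (r t a b : nat) : rat :=
  (frakw F r t a b)%:R / (#|F|.-1)%:R.

Definition hw (F : finFieldType) (r t l m : nat) : rat :=
  \sum_(1 <= s < t.+1) hfrakw F r s l m.

From HB Require Import structures.
From mathcomp Require Import all_boot all_order all_algebra all_field.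
Set Implicit Arguments. Unset Strict Implicit. Unset Printing Implicit Defensive.
Import GRing.Theory Num.Theory.
Local Open Scope ring_scope.

(* Write an l x m matrix (l, m >= 1) in block form  M = [a u; v N]  with a
   scalar corner a; for r >= 1 we have tau_r M = a + tau_(r-1) N.  Up to the
   factor 1/(q-1), hw_r - hw_s is the sum over M of
   [rk M <= t] * ([tau_r M != 0] - [tau_s M != 0]).  Fix N, u, v and sum
   over the corner a first:
   - if u is not in the row space of N, or v not in its column space, then
     rk M does not depend on a, and the a-sum vanishes because a |-> a + c is
     a bijection of F;
   - otherwise u = xN, v = Ny and rk M = rk N + [a != u N^+ v], so the a-sum
     is [rk N = t] * ([c + tau_(r-1) N != 0] - [c + tau_(s-1) N != 0]) with
     c = u N^+ v.
   Then sum over u in the row space and v in the column space of N (which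
   has q^(rk N) elements): u = 0 contributes q^(rk N) times the difference,
   while for u != 0 the map v |-> u N^+ v is a nonzero linear form and the
   v-sum cancels by translating v.  Finally, summing exact ranks 1..t gives
   [rk M <= t] whenever tau M != 0 (which forces M != 0), and tau_0 = 0
   yields the special case. *)

Lemma row_nz_entry (R : nzRingType) n (u : 'rV[R]_n) :
  u != 0 -> exists j, u 0 j != 0.
Proof.
move=> nz_u; apply/existsP; apply: contraR nz_u; rewrite negb_exists.
move=> /forallP u0; apply/eqP/matrixP => i j; rewrite ord1 mxE.
by apply/eqP; rewrite -[_ == _]negbK u0.
Qed.

Section BlockRank.
Variable F : fieldType.
Implicit Type a : F.

Lemma rank_scalar1 a : \rank (a%:M : 'M[F]_1) = (a != 0).
Proof.
have [->|nz_a] := eqVneq a 0; first by rewrite raddf0 mxrank0.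
by rewrite mxrank_unit // unitmxE det_scalar1 unitfE.
Qed.

(* If u is outside the row space of N, a column operation clears the corner
   without changing the rank. *)
Lemma rank_block_row_free n1 n2 a (u : 'rV[F]_n2) (v : 'cV[F]_n1) (N : 'M_(n1, n2)) :
  ~~ (u <= N)%MS -> \rank (block_mx a%:M u v N) = \rank (block_mx 0 u v N).
Proof.
rewrite submxE => /row_nz_entry [j uyj].
set y := col j (cokermx N).
have Ny0 : N *m y = 0 by rewrite /y colE mulmxA mulmx_coker mul0mx.
have uy : (u *m y) 0 0 = (u *m cokermx N) 0 j by rewrite /y colE mulmxA -colE mxE.
set C := block_mx (1 : 'M_1) 0 (- (a / (u *m y) 0 0) *: y) 1.
have freeC : row_free C by rewrite row_free_unit unitmxE det_lblock !det1 mulr1 unitr1.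
rewrite -(mxrankMfree _ freeC) mulmx_block.
rewrite !(mulmx0, mulmx1, addr0, add0r) -!scalemxAr Ny0 scaler0 addr0.
congr (\rank (block_mx _ _ _ _)).
set c := (u *m y) 0 0.
by rewrite [u *m y]mx11_scalar -/c scale_scalar_mx mulNr divfK ?raddfN ?subrr // /c uy.
Qed.

Lemma rank_block_col_free n1 n2 a (u : 'rV[F]_n2) (v : 'cV[F]_n1) (N : 'M_(n1, n2)) :
  ~~ (v^T <= N^T)%MS -> \rank (block_mx a%:M u v N) = \rank (block_mx 0 u v N).
Proof.
move=> v_free; rewrite -mxrank_tr tr_block_mx tr_scalar_mx rank_block_row_free //.
by rewrite -(mxrank_tr (block_mx 0 u v N)) tr_block_mx trmx0.
Qed.

(* If u = xN and v = Ny, row and column operations reduce M to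
   diag(a - xNy, N). *)
Lemma rank_block_factored n1 n2 a (x : 'rV[F]_n1) (y : 'cV[F]_n2) (N : 'M_(n1, n2)) :
  \rank (block_mx a%:M (x *m N) (N *m y) N) = addn (a != (x *m N *m y) 0 0) (\rank N).
Proof.
set b := a - (x *m N *m y) 0 0.
set L := block_mx (1 : 'M_1) x 0 1.
set C := block_mx (1 : 'M_1) 0 y 1.
have unitL : L \in unitmx by rewrite unitmxE det_ublock !det1 mulr1 unitr1.
have unitC : C \in unitmx by rewrite unitmxE det_lblock !det1 mulr1 unitr1.
have -> : block_mx a%:M (x *m N) (N *m y) N = L *m block_mx b%:M 0 0 N *m C.
  rewrite !mulmx_block !(mulmx0, mul0mx, mulmx1, mul1mx, addr0, add0r).
  by rewrite [x *m N *m y]mx11_scalar -raddfD /= subrK.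
rewrite mxrankMfree ?row_free_unit // eqmxMfull ?row_full_unit //.
by rewrite rank_diag_block_mx rank_scalar1 subr_eq0.
Qed.

End BlockRank.

Lemma block_corner_entry (R : Type) n1 n2 (a : 'M[R]_1) (u : 'rV_n2) (v : 'cV_n1)
    (N : 'M_(n1, n2)) :
  (block_mx a u v N : 'M_(n1.+1, n2.+1)) ord0 ord0 = a 0 0.
Proof.
rewrite !mxE; case: splitP => [i _|//]; rewrite mxE; case: splitP => [j _|//].
by rewrite !ord1.
Qed.

Lemma block_lift_entry (R : Type) n1 n2 (a : 'M[R]_1) (u : 'rV_n2) (v : 'cV_n1)
    (N : 'M_(n1, n2)) i j :
  (block_mx a u v N : 'M_(n1.+1, n2.+1)) (lift ord0 i) (lift ord0 j) = N i j.
Proof.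
rewrite !mxE; case: splitP => [k|k /= [/val_inj<-]]; first by rewrite ord1.
by rewrite mxE; case: splitP => [l|l /= [/val_inj<-]] //; rewrite ord1.
Qed.

Lemma tau_block (F : fieldType) n1 n2 r (a : F) (u : 'rV_n2) (v : 'cV_n1)
    (N : 'M_(n1, n2)) :
  (0 < r)%N -> tau r (block_mx a%:M u v N : 'M_(n1.+1, n2.+1)) = a + tau r.-1 N.
Proof.
case: r => // r _; rewrite /tau big_mkcond big_ord_recl /=.
rewrite big_mkcond big_ord_recl /= big1 ?addr0 // block_corner_entry mxE eqxx mulr1n.
congr (_ + _); rewrite [RHS]big_mkcond; apply: eq_bigr => i _.
rewrite /bump leq0n add1n ltnS; case: ifP => // _.
rewrite big_mkcond big_ord_recl /= add0r [RHS]big_mkcond; apply: eq_bigr => j _.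
by rewrite /bump !leq0n !add1n eqSS block_lift_entry.
Qed.

Section Counting.
Variable F : finFieldType.
Local Notation q := #|F|.

Definition ind (b : bool) : rat := (b : nat)%:R.

Lemma ind_true : ind true = 1. Proof. by []. Qed.
Lemma ind_false : ind false = 0. Proof. by []. Qed.

Lemma sum_ind (T : finType) (P : pred T) :
  \sum_(i : T) ind (P i) = #|[set i | P i]|%:R.
Proof.
rewrite -sum1_card natr_sum [RHS]big_mkcond; apply: eq_bigr => i _.
by rewrite inE /ind; case: (P i).
Qed.

(* a |-> a + c permutes F, so the number of a with a + c != 0 does not
   depend on c. *)
Lemma sum_translate_diff (c1 c2 : F) :
  \sum_(a : F) (ind (a + c1 != 0) - ind (a + c2 != 0)) = 0.
Proof.
have shift c : \sum_(a : F) ind (a + c != 0) = \sum_(a : F) ind (a != 0).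
  by rewrite (reindex_inj (addIr (- c))); apply: eq_bigr => a _; rewrite subrK.
by rewrite sumrB !shift subrr.
Qed.

Section CornerSum.
Variables (n1 n2 t : nat) (N : 'M[F]_(n1, n2)) (u : 'rV[F]_n2) (v : 'cV[F]_n1).
Variables c1 c2 : F.

Let corner_sum := \sum_(a : F) ind (\rank (block_mx a%:M u v N) <= t)%N *
                                (ind (a + c1 != 0) - ind (a + c2 != 0)).

Lemma corner_sum_rank_const :
  (forall a, \rank (block_mx a%:M u v N) = \rank (block_mx 0 u v N)) ->
  corner_sum = 0.
Proof.
move=> rank_const; rewrite /corner_sum.
under eq_bigr => a _ do rewrite rank_const.
by rewrite -mulr_sumr sum_translate_diff mulr0.
Qed.

Lemma corner_sumE :
  corner_sum =
  ind (\rank N == t) * (ind (u <= N)%MS * (ind (v^T <= N^T)%MS *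
    (ind ((u *m pinvmx N *m v) 0 0 + c1 != 0) -
     ind ((u *m pinvmx N *m v) 0 0 + c2 != 0)))).
Proof.
have [u_row|u_free] := boolP (u <= N)%MS; last first.
  rewrite corner_sum_rank_const ?(negPf u_free) ?ind_false ?mul0r ?mulr0 // => a.
  exact: rank_block_row_free.
have [v_col|v_free] := boolP (v^T <= N^T)%MS; last first.
  rewrite corner_sum_rank_const ?(negPf v_free) ?ind_false ?mul0r ?mulr0 // => a.
  exact: rank_block_col_free.
have u_fact : u = u *m pinvmx N *m N := esym (mulmxKpV u_row).
have v_fact : v = N *m (v^T *m pinvmx N^T)^T.
  by apply: trmx_inj; rewrite trmx_mul trmxK; exact: esym (mulmxKpV v_col).
rewrite ind_true !mul1r; set c := (u *m pinvmx N *m v) 0 0.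
have rankM a : \rank (block_mx a%:M u v N) = addn (a != c) (\rank N).
  by rewrite {1}u_fact {1}v_fact rank_block_factored -mulmxA -v_fact.
rewrite /corner_sum; under eq_bigr => a _ do rewrite rankM.
have [rk_lt|rk_ge] := ltnP (\rank N) t.
  rewrite (ltn_eqF rk_lt) mul0r -[RHS](sum_translate_diff c1 c2).
  apply: eq_bigr => a _; rewrite (_ : (_ <= t)%N) ?mul1r //.
  by case: (a != c); rewrite ?add1n ?add0n // ltnW.
have [rk_t|rk_gt] := eqVneq (\rank N) t.
  rewrite mul1r (bigD1 c) //= big1 ?addr0 => [|a /negPf nac].
    by rewrite eqxx rk_t leqnn mul1r.
  by rewrite nac rk_t add1n ltnn mul0r.
rewrite mul0r big1 // => a _; rewrite (_ : (_ <= t)%N = false) ?mul0r //.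
apply/negbTE; rewrite -ltnNge; apply: leq_trans (leq_addl _ _).
by rewrite ltn_neqAle eq_sym rk_gt.
Qed.

End CornerSum.

Lemma sum_blocks n1 n2 (f : 'M[F]_(n1.+1, n2.+1) -> rat) :
  \sum_(M : 'M[F]_(n1.+1, n2.+1)) f M =
  \sum_(N : 'M[F]_(n1, n2)) \sum_(u : 'rV[F]_n2) \sum_(v : 'cV[F]_n1)
    \sum_(a : F) f (block_mx a%:M u v N).
Proof.
rewrite !pair_big /=.
pose blocks (M : 'M[F]_(1 + n1, 1 + n2)) :=
  (((drsubmx M, ursubmx M), dlsubmx M), ulsubmx M 0 0).
rewrite (reindex blocks) /=; last first.
  exists (fun p => block_mx p.2%:M p.1.1.2 p.1.2 p.1.1.1) => [M _|[[[N u] v] a] _].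
    by rewrite -mx11_scalar submxK.
  by rewrite /blocks block_mxKdr block_mxKur block_mxKdl block_mxKul mxE eqxx.
by apply: eq_bigr => M _; rewrite -mx11_scalar submxK.
Qed.

Lemma card_colspace n1 n2 (N : 'M[F]_(n1, n2)) :
  \sum_(v : 'cV[F]_n1) ind (v^T <= N^T)%MS = (q ^ \rank N)%:R.
Proof.
rewrite sum_ind; set B := row_base N^T.
have -> : [set v : 'cV[F]_n1 | (v^T <= N^T)%MS] =
          [set (z *m B)^T | z in [set: 'rV[F]_(\rank N^T)]].
  apply/setP => v; rewrite inE -(eq_row_base N^T) -/B; apply/idP/imsetP.
    by case/submxP=> z def_v; exists z; rewrite ?inE // -def_v trmxK.
  by case=> z _ ->; rewrite trmxK submxMl.
rewrite card_imset; last by move=> z1 z2 /trmx_inj/(row_free_inj (row_base_free _)).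
by rewrite cardsT card_mx mul1n mxrank_tr.
Qed.

(* If the linear form v |-> x v takes the value 1 on the column space of N,
   translating v inside that space shows that the number of v in the column
   space with x v + c != 0 does not depend on c. *)
Lemma colspace_sum_translate n1 n2 (N : 'M[F]_(n1, n2)) (x : 'rV[F]_n1)
    (w : 'cV[F]_n1) (c : F) :
  (w^T <= N^T)%MS -> (x *m w) 0 0 = 1 ->
  \sum_(v : 'cV[F]_n1) ind (v^T <= N^T)%MS * ind ((x *m v) 0 0 + c != 0) =
  \sum_(v : 'cV[F]_n1) ind (v^T <= N^T)%MS * ind ((x *m v) 0 0 != 0).
Proof.
move=> w_col xw1; rewrite (reindex_inj (addIr (- (c *: w)))).
apply: eq_bigr => v _; congr (ind _ * ind _).
  rewrite linearD linearN linearZ /=; apply/idP/idP => [vw_col|v_col].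
    by rewrite -[v^T](subrK (c *: w^T)) addmx_sub // scalemx_sub.
  by rewrite addmx_sub // eqmx_opp scalemx_sub.
have entry (A B : 'M[F]_1) d : (A - d *: B) 0 0 = A 0 0 - d * B 0 0 by rewrite !mxE.
by rewrite mulmxDr mulmxN -scalemxAr entry xw1 mulr1 subrK.
Qed.
(* Summing the corner contributions over u in the row space and v in the
   column space of N: only u = 0 survives, with weight q^(rk N). *)
Lemma sum_rowspace_colspace n1 n2 (N : 'M[F]_(n1, n2)) (c1 c2 : F) :
  \sum_(u : 'rV[F]_n2) \sum_(v : 'cV[F]_n1)
    ind (u <= N)%MS * (ind (v^T <= N^T)%MS *
      (ind ((u *m pinvmx N *m v) 0 0 + c1 != 0) -
       ind ((u *m pinvmx N *m v) 0 0 + c2 != 0))) =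
  (q ^ \rank N)%:R * (ind (c1 != 0) - ind (c2 != 0)).
Proof.
rewrite (bigD1 0) //= [X in _ + X]big1 ?addr0 => [|u nz_u].
  rewrite sub0mx -card_colspace mulr_suml; apply: eq_bigr => v _.
  by rewrite ind_true mul1r !mul0mx mxE !add0r.
have [u_row|] := boolP (u <= N)%MS; last by rewrite big1 // => v _; rewrite ind_false mul0r.
set x := u *m pinvmx N; have xN : x *m N = u by rewrite mulmxKpV.
have [w w_col xw1] : exists2 w : 'cV_n1, (w^T <= N^T)%MS & (x *m w) 0 0 = 1.
  have [j uj] := row_nz_entry nz_u.
  exists ((u 0 j)^-1 *: col j N); last first.
    by rewrite -scalemxAr mxE colE mulmxA xN -colE mxE mulVf.
  by rewrite linearZ /= scalemx_sub // colE trmx_mul submxMl.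
rewrite -big_distrr /=; under eq_bigr => v _ do rewrite mulrBr.
by rewrite sumrB !(colspace_sum_translate _ w_col xw1) subrr mulr0.
Qed.
Lemma sum_rank_le_tau_diff n1 n2 r s t : (0 < r)%N -> (0 < s)%N ->
  \sum_(M : 'M[F]_(n1.+1, n2.+1))
     ind (\rank M <= t)%N * (ind (tau r M != 0) - ind (tau s M != 0)) =
  (q ^ t)%:R * \sum_(N : 'M[F]_(n1, n2))
     (ind ((\rank N == t) && (tau r.-1 N != 0)) -
      ind ((\rank N == t) && (tau s.-1 N != 0))).
Proof.
move=> r_gt0 s_gt0; rewrite sum_blocks mulr_sumr; apply: eq_bigr => N _.
transitivity (ind (\rank N == t) *
   ((q ^ \rank N)%:R * (ind (tau r.-1 N != 0) - ind (tau s.-1 N != 0)))).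
  rewrite -sum_rowspace_colspace mulr_sumr; apply: eq_bigr => u _.
  rewrite mulr_sumr; apply: eq_bigr => v _; rewrite -corner_sumE.
  by apply: eq_bigr => a _; rewrite !tau_block.
have [<-|rk_ne] := eqVneq (\rank N) t; first by rewrite ind_true mul1r.
by rewrite ind_false mul0r subrr mulr0.
Qed.

Lemma tau0 n1 n2 r : tau r (0 : 'M[F]_(n1, n2)) = 0.
Proof. by rewrite /tau big1 // => i _; rewrite big1 // => j _; rewrite mxE. Qed.

(* Summing exact ranks 1..t: a matrix with nonzero trace is nonzero, so its
   rank lies in 1..t exactly when it is at most t. *)
Lemma sum_exact_ranks n1 n2 r t (M : 'M[F]_(n1, n2)) :
  \sum_(1 <= k < t.+1) ind ((\rank M == k) && (tau r M != 0)) =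
  ind (\rank M <= t)%N * ind (tau r M != 0).
Proof.
have [tau_M0|tau_Mn0] := eqVneq (tau r M) 0.
  by rewrite ind_false mulr0 big1 // => k _; rewrite andbF.
under eq_bigr => k _ do rewrite andbT.
have rk_gt0 : (0 < \rank M)%N.
  by rewrite lt0n mxrank_eq0; apply: contra tau_Mn0 => /eqP->; rewrite tau0.
have [rk_le|rk_gt] := leqP (\rank M) t.
  rewrite (bigD1_seq (\rank M)) ?mem_index_iota ?rk_gt0 ?iota_uniq //= eqxx.
  by rewrite big1 ?addr0 // => k; rewrite eq_sym => /negPf->.
rewrite mul0r big1_seq // => k /andP[_]; rewrite mem_index_iota ltnS => /andP[_ k_le].
by rewrite gtn_eqF // (leq_ltn_trans k_le rk_gt).
Qed.

Lemma hw_sum r t l m :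
  hw F r t l m =
  (\sum_(M : 'M[F]_(l, m)) ind (\rank M <= t)%N * ind (tau r M != 0)) / q.-1%:R.
Proof.
rewrite /hw /hfrakw /frakw -mulr_suml; congr (_ / _).
under eq_bigr => k _ do rewrite -sum_ind.
by rewrite exchange_big; apply: eq_bigr => M _; apply: sum_exact_ranks.
Qed.

Lemma hfrakw_sum r t l m :
  hfrakw F r t l m =
  (\sum_(M : 'M[F]_(l, m)) ind ((\rank M == t) && (tau r M != 0))) / q.-1%:R.
Proof. by rewrite /hfrakw /frakw -sum_ind. Qed.

(* tau_0 is the empty sum, so no matrix is counted. *)
Lemma hfrakw_tau0 t l m : hfrakw F 0 t l m = 0.
Proof.
rewrite hfrakw_sum big1 ?mul0r // => M _.
by rewrite /tau big_pred0 ?eqxx ?andbF.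
Qed.

Lemma hw_diff s r t l m :
  (1 <= s)%N -> (1 <= r)%N -> (1 <= l)%N -> (1 <= m)%N ->
  hw F r t l m - hw F s t l m =
    (q%:R : rat) ^+ t * (hfrakw F r.-1 t l.-1 m.-1 - hfrakw F s.-1 t l.-1 m.-1).
Proof.
move=> s_gt0 r_gt0; case: l => // n1 _; case: m => // n2 _.
rewrite !hw_sum !hfrakw_sum -mulrBl -sumrB.
under eq_bigr => M _ do rewrite -mulrBr.
by rewrite sum_rank_le_tau_diff // sumrB -mulrBl natrX mulrA.
Qed.
End Counting.

Theorem mainTheorem5 (F : finFieldType) (s r t l m : nat) :
  (1 <= s)%N -> (s <= r)%N -> (r <= l)%N -> (l <= m)%N ->
  (1 <= t)%N -> (t < l)%N ->
  hw F r t l m - hw F s t l m =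
    (#|F|%:R : rat) ^+ t *
      (hfrakw F r.-1 t l.-1 m.-1 - hfrakw F s.-1 t l.-1 m.-1)
  /\
  hw F r t l m - hw F 1 t l m =
    (#|F|%:R : rat) ^+ t * hfrakw F r.-1 t l.-1 m.-1.
Proof.
move=> s_gt0 le_sr le_rl le_lm _ _.
have r_gt0 : (1 <= r)%N := leq_trans s_gt0 le_sr.
have l_gt0 : (1 <= l)%N := leq_trans r_gt0 le_rl.
have m_gt0 : (1 <= m)%N := leq_trans l_gt0 le_lm.
split; first exact: hw_diff.
by rewrite hw_diff // hfrakw_tau0 subr0.
Qed.
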